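(* Let $k\ge2$ and $n\ge3$, and write $q=q_{n,k}$, $r=r_{n,k}$ and $N=N_{n,k}=\lfloor(k-1)(n-1)/k\rfloor$. Write $\mathcal{F}_{n,k}(x)=x^{r}P_{n,k}(x^k)$ with $P_{n,k}(\xi)\in\mathbb{Z}[\xi]$. Then $P_{n,k}$ is monic of degree $N$. Let $\xi_1,\dots,\xi_N$ be its roots counted with multiplicity, and let $\sigma_h$ denote their $h$-th elementary symmetric polynomial. Then $$\sigma_h(\xi_1,\dots,\xi_N)=(-1)^hC_k(n-h-1,h)\quad(h=1,\dots,N),$$ $$\sum_{j=1}^N\xi_j=-(n-2),\qquad\prod_{j=1}^N\xi_j=(-1)^N\binom{q+r}{r}.$$
   Context: For $k\ge2$ and $n\ge1$, the polynomials $\mathcal{F}_{n,k}(x)$ are defined by $\mathcal{F}_{1,k}=1$, $\mathcal{F}_{n,k}=0$ for $n=0,-1,\dots,-(k-2)$, and $\mathcal{F}_{n,k}(x)=x^{k-1}\mathcal{F}_{n-1,k}+\dots+\mathcal{F}_{n-k,k}$ for $n\ge2$. For $n>0$: $q_{n,k}=\lfloor(n-2)/k\rfloor$, and $r_{n,k}\in\{0,\dots,k-1\}$ is the residue of $(k-1)(n-1)$ modulo $k$. For integers $m\ge0$ and $j\ge0$, $C_k(m,j)$ is the coefficient of $x^j$ in $(1+x+\dots+x^{k-1})^m$. It is known (Hoggatt–Bicknell) that $\mathcal{F}_{n,k}(x)=\sum_{h\ge0}C_k(n-h-1,h)\,x^{(k-1)(n-1)-hk}$ for $n\ge1$. *)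

From HB Require Import structures.
From mathcomp Require Import all_boot all_order all_algebra all_field.
Set Implicit Arguments. Unset Strict Implicit. Unset Printing Implicit Defensive.
Import Order.TTheory GRing.Theory Num.Theory.
Local Open Scope ring_scope.

(* A window [w] = [:: F_m; F_(m-1); ...;
   F_(m-k+1)] is mapped to [:: F_(m+1); F_m; ...; F_(m-k+2)], where
   F_(m+1) = x^(k-1) F_m + x^(k-2) F_(m-1) + ... + x^0 F_(m+1-k). *)
Definition kfib_step (k : nat) (w : seq {poly int}) : seq {poly int} :=
  (\sum_(j < k) 'X^(k - 1 - j) * nth 0 w j) :: take (k - 1) w.

(* kfib_win k m = [:: F_(m+1); F_m; ...; F_(m+2-k)] *)
Fixpoint kfib_win (k m : nat) : seq {poly int} :=
  match m with
  | 0 => 1 :: nseq (k - 1) 0   (* F_1 = 1, F_0 = ... = F_(-(k-2)) = 0 *)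
  | m'.+1 => kfib_step k (kfib_win k m')
  end.

(* The polynomial \mathcal{F}_{n,k}(x) (meaningful for n >= 1). *)
Definition kfib (n k : nat) : {poly int} := head 0 (kfib_win k n.-1).

Definition qnk (n k : nat) : nat := ((n - 2) %/ k)%N.
Definition rnk (n k : nat) : nat := (((k - 1) * (n - 1)) %% k)%N.
Definition Nnk (n k : nat) : nat := (((k - 1) * (n - 1)) %/ k)%N.

Definition Ck (k m j : nat) : int := ((\sum_(i < k) 'X^i : {poly int}) ^+ m)`_j.

Definition esym_seq (R : comRingType) (s : seq R) (h : nat) : R :=
  \sum_(I : {set 'I_(size s)} | #|I| == h) \prod_(i in I) s`_i.

From HB Require Import structures.
From mathcomp Require Import all_boot all_order all_algebra all_field.
From mathcomp Require Import zify.
Set Implicit Arguments. Unset Strict Implicit. Unset Printing Implicit Defensive.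
Import Order.TTheory GRing.Theory Num.Theory.
Local Open Scope ring_scope.

(* The Hoggatt-Bicknell formula holds because its right-hand side satisfies
   the k-term recurrence: comparing coefficients, this is the identity
   C_k(m+1, j) = sum_(a < k) C_k(m, j - a), i.e. the expansion of
   (1 + ... + x^(k-1))^(m+1) as (1 + ... + x^(k-1)) times the m-th power.
   Since (k-1)(n-1) = N k + r, the exponents are r + k (N - h) for h <= N
   and the remaining terms vanish, so P_{n,k} has coefficient C_k(n-h-1, h)
   at xi^(N-h) and leading coefficient C_k(n-1, 0) = 1.  Vieta's formulas
   then give the symmetric functions: the sum is -C_k(n-2, 1) = -(n-2), and
   the constant term C_k(q+1, (k-1)(q+1) - r) is one of the r+1 top
   coefficients of (1 + ... + x^(k-1))^(q+1), equal to binomial(q+r, r) by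
   the hockey-stick identity. *)

Definition repunit (k : nat) : {poly int} := \sum_(i < k) 'X^i.

Lemma CkE k m j : Ck k m j = (repunit k ^+ m)`_j.
Proof. by []. Qed.

Lemma coef_repunit k i : (repunit k)`_i = (i < k)%:R.
Proof.
rewrite /repunit coef_sum; case: (ltnP i k) => hi.
  rewrite (bigD1 (Ordinal hi)) //= coefXn eqxx big1 ?addr0 // => j hj.
  by rewrite coefXn; case: eqP => // ij; case/eqP: hj; apply: val_inj.
rewrite big1 // => j _; rewrite coefXn; case: eqP => // ij.
by move: (ltn_ord j); rewrite -ij ltnNge hi.
Qed.

Lemma size_repunit k : (size (repunit k) <= k)%N.
Proof. by apply/leq_sizeP => i hi; rewrite coef_repunit ltnNge hi. Qed.

Lemma Ck_eq0 k m j : ((k - 1) * m < j)%N -> Ck k m j = 0.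
Proof.
move=> hj; rewrite CkE nth_default //.
apply: leq_trans (size_poly_exp_leq _ _) _; apply: leq_trans hj.
by rewrite ltnS leq_mul2r -subn1 leq_sub2r ?size_repunit ?orbT.
Qed.

Lemma Ck_0 k m : (0 < k)%N -> Ck k m 0 = 1.
Proof.
move=> hk; elim: m => [|m IHm]; first by rewrite CkE expr0 coefC.
by rewrite CkE exprS coefM big_ord1 coef_repunit hk -CkE IHm mulr1.
Qed.

Lemma CkS k m j : Ck k m.+1 j = \sum_(a < k | (a <= j)%N) Ck k m (j - a).
Proof.
rewrite CkE exprS coefM.
rewrite (big_ord_widen_cond (k + j.+1) (fun a => (a <= j)%N)
  (fun a => Ck k m (j - a))) ?leq_addr //.
rewrite (big_ord_widen (k + j.+1)
  (fun a => (repunit k)`_a * (repunit k ^+ m)`_(j - a))) ?leq_addl //.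
rewrite big_mkcond [RHS]big_mkcond; apply: eq_bigr => a _ /=.
by rewrite coef_repunit -CkE ltnS; case: (a <= j)%N; case: (a < k)%N;
  rewrite ?mul1r ?mul0r.
Qed.

Lemma Ck_1 k m : (1 < k)%N -> Ck k m 1 = m%:R.
Proof.
move=> hk; elim: m => [|m IHm]; first by rewrite CkE expr0 coefC.
rewrite CkS (bigD1 (Ordinal (ltnW hk))) //= (bigD1 (Ordinal hk)) //= big1.
  by rewrite subnn IHm Ck_0 1?ltnW // addr0 -natr1 addrC.
by case=> [[|[|a]] ha] //= _ /andP[].
Qed.

Lemma sum_bin_hockey m j :
  (\sum_(b < j.+1) 'C(m + (j - b), j - b) = 'C(m.+1 + j, j))%N.
Proof.
elim: j => [|j IHj]; first by rewrite big_ord1 !bin0.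
rewrite big_ord_recl subn0 [in RHS]addnS binS -IHj addSn addnS.
by congr (_ + _)%N; apply: eq_bigr => b _; rewrite /bump /= subSS.
Qed.

Lemma Ck_top k m j : (j < k)%N ->
  Ck k m.+1 ((k - 1) * m.+1 - j) = ('C(m + j, j))%:R.
Proof.
elim: m j => [|m IHm] j hj.
  rewrite CkE expr1 coef_repunit add0n binn.
  by have -> : ((k - 1) * 1 - j < k)%N by lia.
rewrite CkS big_mkcond (reindex_inj rev_ord_inj) /=.
transitivity (\sum_(a < k) if (a <= j)%N then ('C(m + (j - a), j - a))%:R else 0 : int).
  apply: eq_bigr => a _; have ha := ltn_ord a.
  have -> : (k - a.+1 <= (k - 1) * m.+2 - j)%N by nia.
  case: (leqP a j) => haj; last by rewrite Ck_eq0 //; nia.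
  by rewrite -IHm; [congr Ck; nia | lia].
rewrite -sum_bin_hockey natr_sum.
rewrite (big_ord_widen k (fun a => ('C(m + (j - a), j - a))%:R : int)) //.
by rewrite [RHS]big_mkcond.
Qed.

(* The Hoggatt-Bicknell closed form.  Terms with (k-1)(n-1) < h k carry the
   coefficient 0 (Ck_eq0), so the truncated exponent is harmless. *)
Definition kfib_closed (k n : nat) : {poly int} :=
  \sum_(h < n) Ck k (n.-1 - h) h *: 'X^((k - 1) * n.-1 - h * k).

Lemma mulXn_kfib_closed k n j : (j < k)%N ->
  'X^(k - 1 - j) * kfib_closed k (n - j) =
  \sum_(h < n | (j <= h)%N) Ck k (n.-1 - h) (h - j) *: 'X^((k - 1) * n - h * k).
Proof.
move=> hj; rewrite /kfib_closed mulr_sumr.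
case: (leqP j n) => hjn; last first.
  have -> : (n - j = 0)%N by lia.
  by rewrite big_ord0 big1 // => h hh; have := ltn_ord h; lia.
symmetry; rewrite -(big_mkord (fun h => j <= h)%N
  (fun h => Ck k (n.-1 - h) (h - j) *: 'X^((k - 1) * n - h * k))).
rewrite (big_cat_nat (leq0n j) hjn) /= [X in X + _]big_nat_cond.
rewrite [X in X + _]big1 ?add0r; last first.
  by move=> h /andP[/andP[_ hhj] hjh]; lia.
rewrite -{1}(add0n j) big_addn big_mkord; apply: eq_big => // h.
  by rewrite leq_addl.
move=> _; have hh := ltn_ord h; rewrite addnK -scalerAr -exprD.
have -> : (n.-1 - (h + j) = (n - j).-1 - h)%N by lia.
case: (leqP (h * k) ((k - 1) * (n - j).-1)) => hc.
  by congr (_ *: 'X^_); nia.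
by rewrite Ck_eq0 ?scale0r //; nia.
Qed.

(* For j >= n the summand kfib_closed k (n - j) is kfib_closed k 0 = 0, which
   plays the role of the initial values F_0 = ... = F_(2-k) = 0. *)
Lemma kfib_closedS k n : (0 < n)%N ->
  kfib_closed k n.+1 = \sum_(j < k) 'X^(k - 1 - j) * kfib_closed k (n - j).
Proof.
move=> hn.
rewrite (eq_bigr _ (fun (j : 'I_k) _ => mulXn_kfib_closed n (ltn_ord j))).
rewrite (exchange_big_dep xpredT) //= /kfib_closed big_ord_recr /=.
rewrite subnn Ck_eq0 ?scale0r ?addr0; last by lia.
apply: eq_bigr => h _; rewrite -scaler_suml; congr (_ *: _).
have -> : (n - h = (n.-1 - h).+1)%N by have := ltn_ord h; lia.
by rewrite CkS.
Qed.

Lemma nth_kfib_win k m j : (0 < k)%N -> (j < k)%N ->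
  nth 0 (kfib_win k m) j = kfib_closed k (m.+1 - j).
Proof.
move=> hk; elim: m j => [|m IHm] [|j] hj /=.
- by rewrite /kfib_closed big_ord1 Ck_0 ?muln0 ?mul0n ?subnn ?scale1r //; lia.
- by rewrite nth_nseq if_same subSS sub0n /kfib_closed big_ord0.
- by rewrite subn0 kfib_closedS //; apply: eq_bigr => i _; rewrite IHm.
- by rewrite nth_take ?IHm ?subSS //; lia.
Qed.

Lemma kfibE n k : (0 < k)%N -> (0 < n)%N -> kfib n k = kfib_closed k n.
Proof.
by move=> hk hn; rewrite /kfib -nth0 nth_kfib_win ?subn0 ?prednK //; lia.
Qed.

Definition kfib_reduced (n k : nat) : {poly int} :=
  \poly_(i < (Nnk n k).+1) Ck k (n.-1 - (Nnk n k - i)) (Nnk n k - i).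

Section ReducedPolynomial.

Variables k n : nat.
Hypotheses (k_gt1 : (1 < k)%N) (n_gt2 : (2 < n)%N).

Local Notation N := (Nnk n k).
Local Notation r := (rnk n k).
Local Notation q := (qnk n k).
Local Notation s := ((n - 2) %% k)%N.

(* As k - 1 - s < k, this is the Euclidean division defining N and r. *)
Lemma kfib_degree_qsE :
  ((k - 1) * (n - 1) = ((k - 1) * q + s) * k + (k - 1 - s))%N.
Proof.
have := divn_eq (n - 2) k; have := ltn_pmod (n - 2) (ltnW k_gt1).
rewrite /qnk; move: ((n - 2) %/ k)%N s => q' s' hs' hn; nia.
Qed.

Lemma NnkE : N = ((k - 1) * q + s)%N.
Proof.
by rewrite /Nnk kfib_degree_qsE divnMDl ?divn_small ?addn0 //; lia.
Qed.

Lemma rnkE : r = (k - 1 - s)%N.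
Proof. by rewrite /rnk kfib_degree_qsE modnMDl modn_small //; lia. Qed.

Lemma rnk_lt : (r < k)%N.
Proof. by apply: ltn_pmod; lia. Qed.

Lemma n_sub2E : (n - 2 = q * k + s)%N.
Proof. exact: divn_eq. Qed.

Lemma Nnk_gt0 : (0 < N)%N.
Proof. by rewrite NnkE; have := n_sub2E; nia. Qed.

Lemma Nnk_qnkE : (n - N - 1 = q.+1)%N.
Proof. by rewrite NnkE; have := n_sub2E; nia. Qed.

Lemma Nnk_rnkE : N = ((k - 1) * q.+1 - r)%N.
Proof. by rewrite NnkE rnkE; have := ltn_pmod (n - 2) (ltnW k_gt1); nia. Qed.

Lemma kfib_degreeE : ((k - 1) * n.-1 = N * k + r)%N.
Proof. by rewrite -subn1; exact: divn_eq. Qed.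

Lemma coef_kfib_reduced i : (i <= N)%N ->
  (kfib_reduced n k)`_i = Ck k (n.-1 - (N - i)) (N - i).
Proof. by move=> hi; rewrite coef_poly ltnS hi. Qed.

Lemma size_kfib_reduced : size (kfib_reduced n k) = N.+1.
Proof. by apply: size_poly_eq; rewrite subnn Ck_0 ?oner_neq0 //; lia. Qed.

Lemma kfib_reduced_monic : kfib_reduced n k \is monic.
Proof.
by rewrite monicE lead_coefE size_kfib_reduced coef_kfib_reduced // subnn Ck_0 //; lia.
Qed.

Lemma kfib_closed_truncate : kfib_closed k n =
  \sum_(h < N.+1) Ck k (n.-1 - h) h *: 'X^((k - 1) * n.-1 - h * k).
Proof.
have hr := rnk_lt; have hdeg := kfib_degreeE.
rewrite [RHS](big_ord_widen n
  (fun h => Ck k (n.-1 - h) h *: 'X^((k - 1) * n.-1 - h * k))); last first.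
  by have := Nnk_qnkE; lia.
rewrite [RHS]big_mkcond; apply: eq_bigr => h _; case: ifP => // /negbT hN.
have hh := ltn_ord h.
by rewrite Ck_eq0 ?scale0r //; nia.
Qed.

Lemma kfib_factor : kfib n k = 'X^r * (kfib_reduced n k \Po 'X^k).
Proof.
have hr := rnk_lt; have hdeg := kfib_degreeE.
rewrite kfibE ?(ltnW k_gt1) ?(ltnW (ltnW n_gt2)) // kfib_closed_truncate.
rewrite comp_polyE size_kfib_reduced.
rewrite mulr_sumr (reindex_inj rev_ord_inj) /=; apply: eq_bigr => h _.
have hh := ltn_ord h.
rewrite subSS coef_kfib_reduced ?leq_subr // -scalerAr -exprM -exprD.
by congr (_ *: 'X^_); nia.
Qed.

End ReducedPolynomial.

Lemma esym_seq_prod_XsubC (R : comNzRingType) (xs : seq R) h : (h <= size xs)%N ->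
  esym_seq xs h = (-1) ^+ h * (\prod_(z <- xs) ('X - z%:P))`_(size xs - h).
Proof. by move=> hh; rewrite coef_prod_XsubC ?leq_subr // subKn // signrMK. Qed.

Lemma size_roots_map_intr (R : numDomainType) (P : {poly int}) (xs : seq R) :
  map_poly intr P = \prod_(z <- xs) ('X - z%:P) -> size xs = (size P).-1.
Proof.
move=> hP; have := size_map_inj_poly (@intr_inj R) (mulr0z 1) P.
by rewrite hP size_prod_XsubC => <-.
Qed.

Theorem mainTheorem17 (k n : nat) (hk : (2 <= k)%N) (hn : (3 <= n)%N) :
  exists P : {poly int},
    [/\ kfib n k = 'X^(rnk n k) * (P \Po 'X^k),
        P \is monic,
        size P = (Nnk n k).+1 &
        forall xi : seq algC,
          map_poly intr P = \prod_(z <- xi) ('X - z%:P) ->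
          [/\ forall h : nat, (1 <= h <= Nnk n k)%N ->
                esym_seq xi h = (-1) ^+ h * (Ck k (n - h - 1) h)%:~R,
              \sum_(z <- xi) z = - (n - 2)%:R &
              \prod_(z <- xi) z = (-1) ^+ (Nnk n k) * ('C(qnk n k + rnk n k, rnk n k))%:R]].
Proof.
exists (kfib_reduced n k); split;
  [exact: kfib_factor | exact: kfib_reduced_monic | exact: size_kfib_reduced |].
move=> xi hxi.
have size_xi : size xi = Nnk n k.
  by rewrite (size_roots_map_intr hxi) size_kfib_reduced.
have coef_xi i : (i <= Nnk n k)%N -> (\prod_(z <- xi) ('X - z%:P))`_i =
    (Ck k (n.-1 - (Nnk n k - i)) (Nnk n k - i))%:~R.
  by move=> hi; rewrite -hxi coef_map_id0 // coef_kfib_reduced.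
have N_gt0 := Nnk_gt0 hk hn.
split.
- move=> h /andP[h_gt0 hN].
  rewrite esym_seq_prod_XsubC size_xi // coef_xi ?leq_subr // subKn //.
  by have -> : (n - h - 1 = n.-1 - h)%N by lia.
- apply: oppr_inj; rewrite -coefPn_prod_XsubC ?size_xi -?lt0n //.
  rewrite coef_xi ?leq_pred //.
  have -> : (Nnk n k - (Nnk n k).-1 = 1)%N by lia.
  by rewrite subn1 -subn2 Ck_1 // natz opprK.
- apply: (canRL (signrMK (Nnk n k))).
  rewrite -size_xi -coef0_prod_XsubC coef_xi // !subn0.
  have -> : (n.-1 - Nnk n k = (qnk n k).+1)%N by rewrite -subn1 subnAC Nnk_qnkE.
  by rewrite Nnk_rnkE // Ck_top ?rnk_lt // natz.
Qed.
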